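(* Let $u$ be the exact solution of $\dot u=f(u,t)$, $t\in(0,T]$, $u(0)=u_0$, and let $U$ be a piecewise polynomial approximation of $u$ ($U_i|_{I_{ij}}$ a polynomial for each $i,j$, with the convention $U_i(0^-)=u_i(0)$), right-continuous at $T$, with $e=U-u$ and $e(T)\ne0$. Let $\varphi$ solve the dual problem $-\dot\varphi=J^*(u,U,\cdot)\varphi$ on $[0,T)$ with $\varphi(T)=e(T)/\|e(T)\|$ (i.e. $g=0$). Then $$\|e(T)\|=\sum_{i=1}^N\sum_{j=1}^{M_i}\Big[\int_{I_{ij}}R_i(U,\cdot)\varphi_i\,dt+[U_i]_{i,j-1}\varphi_i(t_{i,j-1})\Big],$$ where $R_i(U,t)=\dot U_i(t)-f_i(U(t),t)$ on $(t_{i,j-1},t_{ij})$.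
   Context: $f:\mathbb{R}^N\times(0,T]\to\mathbb{R}^N$ is bounded, Lipschitz and continuously differentiable in $u$; $\|\cdot\|$ is the Euclidean norm. For each component $i$ there is a partition $0=t_{i0}<\dots<t_{iM_i}=T$ with $I_{ij}=(t_{i,j-1},t_{ij}]$; jumps are $[U_i]_{ij}=U_i(t_{ij}^+)-U_i(t_{ij}^-)$. $J^*(v_1,v_2,t)=\big(\int_0^1\frac{\partial f}{\partial u}(s v_1+(1-s)v_2,t)\,ds\big)^{*}$ with $^*$ the transpose. *)

From Stdlib Require Import Reals Lra.
From Coquelicot Require Import Coquelicot.
Open Scope R_scope.

(* Vectors in R^N are represented as functions nat -> R; only the
   components 0..N-1 are meaningful (components are numbered from 0,
   the paper numbers them 1..N). *)
Definition vec := nat -> R.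

Fixpoint sumR (n : nat) (F : nat -> R) : R :=
  match n with
  | O => 0
  | S m => sumR m F + F m
  end.

Definition vnorm (N : nat) (v : vec) : R := sqrt (sumR N (fun i => (v i) ^ 2)).

Definition vsub (v w : vec) : vec := fun i => v i - w i.

Definition vcomb (s : R) (v1 v2 : vec) : vec := fun i => s * v1 i + (1 - s) * v2 i.

Definition vupd (v : vec) (k : nat) (x : R) : vec :=
  fun m => if Nat.eqb m k then x else v m.

Definition pdf (f : vec -> R -> vec) (i k : nat) (v : vec) (t : R) : R :=
  Derive (fun x => f (vupd v k x) t i) (v k).

(* J^*(v1,v2,t)_{ik} = ( int_0^1 df/du (s v1 + (1-s) v2, t) ds )^T_{ik}
                     = int_0^1 d f_k / d u_i (s v1 + (1-s) v2, t) ds *)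
Definition Jstar (f : vec -> R -> vec) (v1 v2 : vec) (t : R) (i k : nat) : R :=
  RInt (fun s => pdf f k i (vcomb s v1 v2) t) 0 1.

(* polynomials given by their coefficient list [c0; c1; ...] (Horner evaluation) *)
Fixpoint peval (p : list R) (t : R) : R :=
  match p with
  | nil => 0
  | cons c q => c + t * peval q t
  end.

Definition f_bounded (N : nat) (T : R) (f : vec -> R -> vec) : Prop :=
  exists B, forall v t, 0 < t <= T -> vnorm N (f v t) <= B.

Definition f_lipschitz (N : nat) (T : R) (f : vec -> R -> vec) : Prop :=
  exists L, forall v w t s, 0 < t <= T -> 0 < s <= T ->
    vnorm N (vsub (f v t) (f w s)) <= L * (vnorm N (vsub v w) + Rabs (t - s)).

Definition f_C1_in_u (N : nat) (T : R) (f : vec -> R -> vec) : Prop :=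
  (forall v t i k, 0 < t <= T -> (i < N)%nat -> (k < N)%nat ->
     ex_derive (fun x => f (vupd v k x) t i) (v k)) /\
  (forall v t i k, 0 < t <= T -> (i < N)%nat -> (k < N)%nat ->
     forall eps, 0 < eps -> exists delta, 0 < delta /\
       forall w s, 0 < s <= T -> vnorm N (vsub w v) < delta -> Rabs (s - t) < delta ->
         Rabs (pdf f i k w s - pdf f i k v t) < eps).

Definition cont_on_0T (T : R) (g : R -> R) : Prop :=
  forall t, 0 <= t <= T ->
    filterlim g (within (fun s => 0 <= s <= T) (locally t)) (locally (g t)).

Definition is_node (N : nat) (M : nat -> nat) (tt : nat -> nat -> R) (t : R) : Prop :=
  exists k j, (k < N)%nat /\ (j <= M k)%nat /\ t = tt k j.

(* jump [U_i]_{i,j-1} = U_i(t_{i,j-1}^+) - U_i(t_{i,j-1}^-), for 1 <= j <= M_i,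
   where U_i = P i j on I_{ij}; so U_i(t_{i,j-1}^+) = (P i j)(t_{i,j-1}),
   U_i(t_{i,j-1}^-) = (P i (j-1))(t_{i,j-1}) for j >= 2, and for j = 1 the
   convention U_i(0^-) = u_i(0) is used. *)
Definition jump_prev (P : nat -> nat -> list R) (tt : nat -> nat -> R) (u0 : vec)
    (i j : nat) : R :=
  peval (P i j) (tt i (j - 1)%nat)
  - (if Nat.eqb j 1 then u0 i else peval (P i (j - 1)%nat) (tt i (j - 1)%nat)).

From Stdlib Require Import Reals.
From Coquelicot Require Import Coquelicot.
From Stdlib Require Import Lra Lia List FunctionalExtensionality.
Open Scope R_scope.

(* Write [e = U - u] and let [A_ij = (P_ij - u_i) phi_i] be the error on the cell
   [I_ij] weighted by the dual solution.  Since [phi(T) = e(T)/|e(T)|],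
   [|e(T)| = sum_i e_i(T) phi_i(T)], and summing the increments of [A_ij] over the
   cells of each component together with the jumps telescopes to this quantity.
   The increments are integrals of [A_ij'], and on every interval free of nodes
   [sum_i A_ij' = sum_i R_i phi_i]: the exact mean-value identity
   [f(U) - f(u) = J(u,U) e], transposed, cancels the dual equation
   [-phi' = J^* phi] against [f(U) - f(u)].  Only the sum over [i] has this
   integrable form, so the increments of all components are integrated together,
   piece by piece between the nodes of all partitions. *)

Lemma sumR_ext n F G : (forall i, (i < n)%nat -> F i = G i) -> sumR n F = sumR n G.
Proof.
  induction n as [|n IH]; simpl; intros H; auto.
  rewrite IH, H by (auto || intros; apply H; lia). reflexivity.
Qed.

Lemma sumR_plus n F G : sumR n (fun i => F i + G i) = sumR n F + sumR n G.
Proof. induction n; simpl; [lra|]. rewrite IHn; lra. Qed.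

Lemma sumR_minus n F G : sumR n (fun i => F i - G i) = sumR n F - sumR n G.
Proof. induction n; simpl; [lra|]. rewrite IHn; lra. Qed.

Lemma sumR_scal n c F : sumR n (fun i => c * F i) = c * sumR n F.
Proof. induction n; simpl; [lra|]. rewrite IHn; lra. Qed.

Lemma sumR_zero n : sumR n (fun _ => 0) = 0.
Proof. induction n; simpl; lra. Qed.

Lemma sumR_const n c : sumR n (fun _ => c) = INR n * c.
Proof. induction n; simpl sumR; [simpl; lra|]. rewrite IHn, S_INR; lra. Qed.

Lemma sumR_swap n m F :
  sumR n (fun i => sumR m (fun k => F i k)) = sumR m (fun k => sumR n (fun i => F i k)).
Proof. induction n; simpl. - now rewrite sumR_zero. - now rewrite IHn, <- sumR_plus. Qed.

Lemma sumR_telescope n F : sumR n (fun i => F (S i) - F i) = F n - F 0%nat.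
Proof. induction n; simpl; [lra|]. rewrite IHn; lra. Qed.

Lemma sumR_le n F G : (forall i, (i < n)%nat -> F i <= G i) -> sumR n F <= sumR n G.
Proof.
  induction n; simpl; intros H; [lra|].
  assert (sumR n F <= sumR n G) by (apply IHn; intros; apply H; lia).
  assert (F n <= G n) by (apply H; lia). lra.
Qed.

Lemma sumR_nonneg n F : (forall i, (i < n)%nat -> 0 <= F i) -> 0 <= sumR n F.
Proof. intros H. rewrite <- (sumR_zero n). now apply sumR_le. Qed.

Lemma sumR_ge_term n F i :
  (forall k, (k < n)%nat -> 0 <= F k) -> (i < n)%nat -> F i <= sumR n F.
Proof.
  induction n; simpl; intros H Hi; [lia|].
  assert (0 <= sumR n F) by (apply sumR_nonneg; intros; apply H; lia).
  destruct (Nat.eq_dec i n) as [->|Hin]; [lra|].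
  assert (F i <= sumR n F) by (apply IHn; [intros; apply H|]; lia).
  assert (0 <= F n) by (apply H; lia). lra.
Qed.

Lemma sumR_abs n F : Rabs (sumR n F) <= sumR n (fun i => Rabs (F i)).
Proof.
  induction n; simpl.
  - rewrite Rabs_R0; lra.
  - eapply Rle_trans; [apply Rabs_triang|]. lra.
Qed.

Lemma sumR_delta n J x : (J < n)%nat -> sumR n (fun j => if Nat.eqb j J then x else 0) = x.
Proof.
  induction n; simpl; intros H; [lia|].
  destruct (Nat.eqb_spec n J) as [->|HnJ].
  - rewrite (sumR_ext J _ (fun _ => 0)), sumR_zero; [lra|].
    intros i Hi. destruct (Nat.eqb_spec i J); [lia|auto].
  - rewrite IHn by lia. lra.
Qed.

Lemma is_RInt_sumR n (F : nat -> R -> R) (I : nat -> R) a b :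
  (forall i, (i < n)%nat -> is_RInt (F i) a b (I i)) ->
  is_RInt (fun t => sumR n (fun i => F i t)) a b (sumR n I).
Proof.
  induction n; simpl; intros H.
  - pose proof (@is_RInt_const R_NormedModule a b 0) as H0.
    unfold scal in H0; simpl in H0; unfold mult in H0; simpl in H0.
    now rewrite Rmult_0_r in H0.
  - apply (is_RInt_plus (fun t => sumR n (fun i => F i t)) (F n));
      [apply IHn; intros|]; apply H; lia.
Qed.

Lemma is_derive_sumR n (F : nat -> R -> R) (dF : nat -> R) x :
  (forall i, (i < n)%nat -> is_derive (F i) x (dF i)) ->
  is_derive (fun t => sumR n (fun i => F i t)) x (sumR n dF).
Proof.
  induction n; simpl; intros H.
  - apply (@is_derive_const R_AbsRing).
  - apply (is_derive_plus (fun t => sumR n (fun i => F i t)) (F n));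
      [apply IHn; intros|]; apply H; lia.
Qed.

Lemma continuity_pt_sumR n (F : nat -> R -> R) x :
  (forall i, (i < n)%nat -> continuity_pt (F i) x) ->
  continuity_pt (fun t => sumR n (fun i => F i t)) x.
Proof.
  induction n; simpl; intros H.
  - apply continuity_pt_const. intros ? ?; reflexivity.
  - apply (continuity_pt_plus (fun t => sumR n (fun i => F i t)) (F n));
      [apply IHn; intros|]; apply H; lia.
Qed.

Lemma is_RInt_partition (g : R -> R) (x : nat -> R) M :
  (forall j, (j < M)%nat -> ex_RInt g (x j) (x (S j))) ->
  is_RInt g (x 0%nat) (x M) (sumR M (fun j => RInt g (x j) (x (S j)))).
Proof.
  induction M; simpl; intros H.
  - exact (@is_RInt_point R_NormedModule g (x 0%nat)).
  - apply (is_RInt_Chasles g _ (x M)); [apply IHM; intros; apply H; lia|].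
    apply (@RInt_correct R_CompleteNormedModule). apply H; lia.
Qed.

Lemma vnorm_nonneg N v : 0 <= vnorm N v.
Proof. apply sqrt_pos. Qed.

Lemma Rabs_le_vnorm N v i : (i < N)%nat -> Rabs (v i) <= vnorm N v.
Proof.
  intros Hi. unfold vnorm. rewrite <- sqrt_Rsqr_abs. apply sqrt_le_1_alt.
  unfold Rsqr. replace (v i * v i) with (v i ^ 2) by ring.
  apply (sumR_ge_term N (fun i => v i ^ 2)); auto. intros; apply pow2_ge_0.
Qed.

Lemma vnorm_le_sumR_abs N v : vnorm N v <= sumR N (fun i => Rabs (v i)).
Proof.
  assert (Hs : 0 <= sumR N (fun i => Rabs (v i))) by (apply sumR_nonneg; intros; apply Rabs_pos).
  unfold vnorm. rewrite <- (sqrt_pow2 _ Hs). apply sqrt_le_1_alt.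
  clear Hs. induction N; simpl; [lra|].
  assert (0 <= sumR N (fun i => Rabs (v i))) by (apply sumR_nonneg; intros; apply Rabs_pos).
  assert (Rabs (v N) ^ 2 = v N ^ 2) by (rewrite <- !Rsqr_pow2, <- Rsqr_abs; auto).
  pose proof (Rabs_pos (v N)). simpl in IHN. nra.
Qed.

Lemma vnorm_lt N v e :
  0 < e -> (forall k, (k < N)%nat -> Rabs (v k) < e / (INR N + 1)) -> vnorm N v < e.
Proof.
  intros He H. pose proof (pos_INR N).
  apply Rle_lt_trans with (INR N * (e / (INR N + 1))).
  - eapply Rle_trans; [apply vnorm_le_sumR_abs|]. rewrite <- sumR_const.
    apply sumR_le. intros; left; auto.
  - apply Rmult_lt_reg_r with (INR N + 1); [lra|].
    replace (INR N * (e / (INR N + 1)) * (INR N + 1)) with (INR N * e) by (field; lra). nra.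
Qed.

Lemma vnorm_eq0 N v : (forall i, (i < N)%nat -> v i = 0) -> vnorm N v = 0.
Proof.
  intros H. unfold vnorm. rewrite (sumR_ext N _ (fun _ => 0)), sumR_zero; [apply sqrt_0|].
  intros i Hi. rewrite H; auto. ring.
Qed.

Lemma vnorm_sqr N v : vnorm N v * vnorm N v = sumR N (fun i => v i ^ 2).
Proof. apply sqrt_sqrt, sumR_nonneg. intros; apply pow2_ge_0. Qed.

Definition clamp (a b x : R) : R := Rmax a (Rmin b x).

Lemma clamp_in a b x : a <= b -> a <= clamp a b x <= b.
Proof. intros. unfold clamp, Rmax, Rmin. repeat destruct Rle_dec; lra. Qed.

Lemma clamp_id a b x : a <= x <= b -> clamp a b x = x.
Proof. intros. unfold clamp, Rmax, Rmin. repeat destruct Rle_dec; lra. Qed.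

Lemma clamp_low a b x : x <= a -> a <= b -> clamp a b x = a.
Proof. intros. unfold clamp, Rmax, Rmin. repeat destruct Rle_dec; lra. Qed.

Lemma clamp_high a b x : b <= x -> a <= b -> clamp a b x = b.
Proof. intros. unfold clamp, Rmax, Rmin. repeat destruct Rle_dec; lra. Qed.

Lemma clamp_lipschitz a b x y : a <= b -> Rabs (clamp a b y - clamp a b x) <= Rabs (y - x).
Proof.
  intros. unfold clamp, Rmax, Rmin.
  repeat destruct Rle_dec; unfold Rabs; repeat destruct Rcase_abs; lra.
Qed.

Lemma continuity_pt_eps f x :
  (forall eps, 0 < eps -> exists d, 0 < d /\
     forall y, Rabs (y - x) < d -> Rabs (f y - f x) < eps) ->
  continuity_pt f x.
Proof.
  intros H eps Heps. destruct (H eps Heps) as [d [Hd H']].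
  exists d; split; auto. intros y [_ Hy]. apply H'. exact Hy.
Qed.

Lemma continuity_pt_eps_inv f x : continuity_pt f x ->
  forall eps, 0 < eps -> exists d, 0 < d /\
    forall y, Rabs (y - x) < d -> Rabs (f y - f x) < eps.
Proof.
  intros H eps Heps. destruct (H eps Heps) as [d [Hd H']].
  exists d; split; auto. intros y Hy.
  destruct (Req_dec x y) as [<-|Hne]; [rewrite Rminus_diag, Rabs_R0; auto|].
  apply H'. split; [split; [exact I|auto]|exact Hy].
Qed.

Lemma continuity_pt_clamp a b x : a <= b -> continuity_pt (clamp a b) x.
Proof.
  intros Hab. apply continuity_pt_eps. intros eps He. exists eps; split; auto.
  intros y Hy. eapply Rle_lt_trans; [apply clamp_lipschitz|]; auto.
Qed.

(* Continuity of [g] on the closed interval [a, b], one-sided at the ends,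
   encoded as continuity of [g] composed with the clamp onto [a, b]. *)
Definition cont_on_closed (a b : R) (g : R -> R) : Prop :=
  forall x, continuity_pt (fun y => g (clamp a b y)) x.

Lemma cont_on_closed_eps a b g : a <= b ->
  (forall t, a <= t <= b -> forall eps, 0 < eps -> exists d, 0 < d /\
     forall s, a <= s <= b -> Rabs (s - t) < d -> Rabs (g s - g t) < eps) ->
  cont_on_closed a b g.
Proof.
  intros Hab H x. apply continuity_pt_eps. intros eps He.
  destruct (H (clamp a b x) (clamp_in a b x Hab) eps He) as [d [Hd H']].
  exists d; split; auto. intros y Hy. apply H'; [apply clamp_in; auto|].
  eapply Rle_lt_trans; [apply clamp_lipschitz|]; auto.
Qed.

Lemma cont_on_0T_closed T g : cont_on_0T T g -> cont_on_closed 0 T g.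
Proof.
  intros H x. apply continuity_pt_eps. intros eps He.
  assert (HT : 0 <= T \/ T < 0) by lra. destruct HT as [HT|HT].
  - destruct (H (clamp 0 T x) (clamp_in 0 T x HT) (fun y => Rabs (y - g (clamp 0 T x)) < eps))
      as [d Hd]; [exists (mkposreal eps He); intros y Hy; exact Hy|].
    exists d; split; [apply cond_pos|]. intros y Hy. apply Hd; [|apply clamp_in; auto].
    eapply Rle_lt_trans; [apply clamp_lipschitz|]; auto.
  - exists 1. split; [lra|]. intros y _.
    unfold clamp, Rmax, Rmin. repeat destruct Rle_dec; try lra;
    rewrite Rminus_diag, Rabs_R0; auto.
Qed.

Lemma cont_on_closed_minus a b g1 g2 :
  cont_on_closed a b g1 -> cont_on_closed a b g2 -> cont_on_closed a b (fun t => g1 t - g2 t).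
Proof. intros H1 H2 x. apply (continuity_pt_minus (fun y => g1 _) (fun y => g2 _)); auto. Qed.

Lemma cont_on_closed_mult a b g1 g2 :
  cont_on_closed a b g1 -> cont_on_closed a b g2 -> cont_on_closed a b (fun t => g1 t * g2 t).
Proof. intros H1 H2 x. apply (continuity_pt_mult (fun y => g1 _) (fun y => g2 _)); auto. Qed.

Lemma cont_on_closed_continuous a b g :
  a <= b -> (forall x, continuity_pt g x) -> cont_on_closed a b g.
Proof.
  intros Hab H x. apply (continuity_pt_comp (clamp a b) g); auto.
  now apply continuity_pt_clamp.
Qed.

Lemma cont_on_closed_sub a b c d g :
  a <= c -> c <= d -> d <= b -> cont_on_closed a b g -> cont_on_closed c d g.
Proof.
  intros H1 H2 H3 H x. apply (continuity_pt_ext (fun y => g (clamp a b (clamp c d y)))).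
  - intros y. pose proof (clamp_in c d y H2). rewrite (clamp_id a b); auto. lra.
  - apply (continuity_pt_comp (clamp c d) (fun z => g (clamp a b z))); auto.
    now apply continuity_pt_clamp.
Qed.

Lemma cont_on_closed_sumR a b n F : a <= b ->
  (forall i, (i < n)%nat -> cont_on_closed a b (F i)) ->
  cont_on_closed a b (fun t => sumR n (fun i => F i t)).
Proof.
  intros Hab H x. apply (continuity_pt_sumR n (fun i y => F i (clamp a b y))).
  intros i Hi. now apply H.
Qed.

Lemma cont_on_closed_continuous_clamp a b g x :
  cont_on_closed a b g -> continuous (fun y => g (clamp a b y)) x.
Proof. intros H. apply continuity_pt_filterlim, H. Qed.

Lemma locally_open_interval c d t : c < t < d -> locally t (fun s => c < s < d).
Proof.
  intros H. assert (Hp : 0 < Rmin (t - c) (d - t)) by (apply Rmin_pos; lra).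
  exists (mkposreal _ Hp). intros y Hy. simpl in Hy. unfold ball in Hy; simpl in Hy.
  unfold AbsRing_ball, abs, minus, plus, opp in Hy; simpl in Hy. apply Rabs_def2 in Hy.
  pose proof (Rmin_l (t - c) (d - t)). pose proof (Rmin_r (t - c) (d - t)). lra.
Qed.

(* The derivative is only known on the open interval; comparing [W] with the
   primitive of [hh] by the mean value theorem closes the gap at the ends. *)
Lemma is_RInt_derive_open (W hh : R -> R) c d : c < d ->
  cont_on_closed c d hh -> (forall x, continuity_pt W x) ->
  (forall t, c < t < d -> is_derive W t (hh t)) -> is_RInt hh c d (W d - W c).
Proof.
  intros Hcd Hhh HW HD.
  set (H := fun y => hh (clamp c d y)).
  assert (Hc : forall x, continuous H x) by (intros; now apply cont_on_closed_continuous_clamp).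
  assert (Hex : forall x y, ex_RInt H x y)
    by (intros; apply (@ex_RInt_continuous R_CompleteNormedModule); auto).
  assert (HdI : forall x, is_derive (RInt H c) x (H x)).
  { intros x. apply is_derive_RInt with c; auto.
    apply filter_forall. intros; apply (@RInt_correct R_CompleteNormedModule); auto. }
  destruct (MVT_gen (fun x => W x - RInt H c x) c d (fun x => hh x - H x)) as [c0 [Hc0 Heq]];
    rewrite ?Rmin_left, ?Rmax_right in * by lra.
  - intros x Hx. apply (is_derive_minus W (RInt H c)); auto.
  - intros x Hx. apply continuity_pt_minus; auto. apply continuity_pt_filterlim.
    apply (@ex_derive_continuous R_AbsRing R_NormedModule). eexists; apply HdI.
  - assert (hh c0 - H c0 = 0) as H0 by (unfold H; rewrite clamp_id; lra).
    rewrite H0, Rmult_0_l, RInt_point in Heq.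
    assert (E : RInt H c d = W d - W c) by (unfold zero in Heq; simpl in Heq; lra).
    apply (is_RInt_ext H); [|rewrite <- E; apply (@RInt_correct R_CompleteNormedModule), Hex].
    rewrite Rmin_left, Rmax_right by lra. intros x Hx. unfold H. rewrite clamp_id; lra.
Qed.

Lemma node_free_induction (Q : R -> R -> Prop) (S : list R) :
  (forall a s b, a < s < b -> Q a s -> Q s b -> Q a b) ->
  forall a b, a < b ->
  (forall c d, a <= c -> c < d -> d <= b -> (forall s, In s S -> ~ c < s < d) -> Q c d) ->
  Q a b.
Proof.
  intros Hchasles. induction S as [|s S IH]; intros a b Hab Hcell.
  - apply Hcell; [lra|lra|lra|]. intros s [].
  - assert (Hcell' : forall a' b', a <= a' -> b' <= b -> ~ a' < s < b' ->
      (forall c d, a' <= c -> c < d -> d <= b' -> (forall s, In s S -> ~ c < s < d) -> Q c d)).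
    { intros a' b' Ha Hb Hs c d Hc Hcd Hd Hn. apply Hcell; try lra.
      intros s0 [<-|Hs0]; [lra|auto]. }
    destruct (Rlt_dec a s); [destruct (Rlt_dec s b)|].
    + apply (Hchasles a s b); [lra| |]; apply IH; try lra; apply Hcell'; lra.
    + apply IH, Hcell'; lra.
    + apply IH, Hcell'; lra.
Qed.

Lemma ex_RInt_piecewise (h : R -> R) (S : list R) a b : a < b ->
  (forall c d, a <= c -> c < d -> d <= b -> (forall s, In s S -> ~ c < s < d) ->
     exists hh, cont_on_closed c d hh /\ forall t, c < t < d -> h t = hh t) ->
  ex_RInt h a b.
Proof.
  intros Hab Hcell. apply (node_free_induction (ex_RInt h) S); auto.
  { intros; eapply ex_RInt_Chasles; eauto. }
  intros c d Hac Hcd Hdb Hn. destruct (Hcell c d Hac Hcd Hdb Hn) as [hh [Hhh Hh]].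
  apply (ex_RInt_ext (fun y => hh (clamp c d y))).
  - rewrite Rmin_left, Rmax_right by lra. intros x Hx. rewrite clamp_id by lra. symmetry; auto.
  - apply (@ex_RInt_continuous R_CompleteNormedModule).
    intros; now apply cont_on_closed_continuous_clamp.
Qed.

Lemma is_RInt_derive_piecewise (W h : R -> R) (S : list R) a b : a < b ->
  (forall x, continuity_pt W x) ->
  (forall c d, a <= c -> c < d -> d <= b -> (forall s, In s S -> ~ c < s < d) ->
     exists hh, cont_on_closed c d hh /\
       forall t, c < t < d -> h t = hh t /\ is_derive W t (hh t)) ->
  is_RInt h a b (W b - W a).
Proof.
  intros Hab HW Hcell.
  apply (node_free_induction (fun c d => is_RInt h c d (W d - W c)) S); auto.
  - intros a' s b' _ H1 H2. replace (W b' - W a') with (plus (W s - W a') (W b' - W s))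
      by (unfold plus; simpl; ring). exact (is_RInt_Chasles h _ _ _ _ _ H1 H2).
  - intros c d Hac Hcd Hdb Hn. destruct (Hcell c d Hac Hcd Hdb Hn) as [hh [Hhh Hh]].
    apply (is_RInt_ext hh).
    + rewrite Rmin_left, Rmax_right by lra. intros x Hx. symmetry; apply Hh; auto.
    + apply is_RInt_derive_open; auto. intros; apply Hh; auto.
Qed.

Fixpoint peval_deriv (p : list R) (t : R) : R :=
  match p with
  | nil => 0
  | cons _ q => peval q t + t * peval_deriv q t
  end.

Lemma is_derive_peval p t : is_derive (peval p) t (peval_deriv p t).
Proof.
  revert t; induction p as [|c q IH]; intros t; simpl.
  - apply (@is_derive_const R_AbsRing).
  - apply is_derive_Reals.
    replace (peval q t + t * peval_deriv q t)
      with (0 + (1 * peval q t + t * peval_deriv q t)) by ring.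
    apply (derivable_pt_lim_plus (fun _ => c) (fun t => t * peval q t));
      [apply derivable_pt_lim_const|].
    apply (derivable_pt_lim_mult id (peval q)); [apply derivable_pt_lim_id|].
    apply is_derive_Reals, IH.
Qed.

Lemma continuity_pt_peval p x : continuity_pt (peval p) x.
Proof.
  apply continuity_pt_filterlim, (@ex_derive_continuous R_AbsRing R_NormedModule).
  eexists; apply is_derive_peval.
Qed.

Lemma continuity_pt_peval_deriv p x : continuity_pt (peval_deriv p) x.
Proof.
  induction p as [|c q IH]; simpl.
  - apply continuity_pt_const. intros ? ?; reflexivity.
  - apply (continuity_pt_plus (peval q) (fun t => t * peval_deriv q t));
      [apply continuity_pt_peval|].
    apply (continuity_pt_mult id (peval_deriv q)); auto.
    apply derivable_continuous_pt, derivable_pt_id.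
Qed.

Lemma finite_choice {A : Type} (a0 : A) N (Q : nat -> A -> Prop) :
  (forall i, (i < N)%nat -> exists x, Q i x) ->
  exists g : nat -> A, forall i, (i < N)%nat -> Q i (g i).
Proof.
  induction N; intros H.
  - exists (fun _ => a0). intros; lia.
  - destruct IHN as [g Hg]; [intros; apply H; lia|].
    destruct (H N ltac:(lia)) as [x Hx].
    exists (fun i => if Nat.eqb i N then x else g i). intros i Hi.
    destruct (Nat.eqb_spec i N); [subst; auto|]. apply Hg; lia.
Qed.

Lemma finite_common_delta N (Q : nat -> R -> Prop) :
  (forall i d d', (i < N)%nat -> 0 < d' <= d -> Q i d -> Q i d') ->
  (forall i, (i < N)%nat -> exists d, 0 < d /\ Q i d) ->
  exists d, 0 < d /\ forall i, (i < N)%nat -> Q i d.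
Proof.
  intros Hmono. induction N; intros H.
  - exists 1. split; [lra|intros; lia].
  - destruct IHN as [d [Hd HQ]];
      [intros i d0 d' Hi; apply Hmono; lia|intros; apply H; lia|].
    destruct (H N ltac:(lia)) as [d1 [Hd1 HQ1]].
    pose proof (Rmin_pos d d1 Hd Hd1). pose proof (Rmin_l d d1). pose proof (Rmin_r d d1).
    exists (Rmin d d1). split; auto. intros i Hi.
    destruct (Nat.eq_dec i N) as [->|Hne].
    + apply (Hmono N d1); [lia|lra|exact HQ1].
    + apply (Hmono i d); [lia|lra|apply HQ; lia].
Qed.

Lemma path_components_close N (Pv : R -> vec) x e :
  (forall k, (k < N)%nat -> continuity_pt (fun t => Pv t k) x) -> 0 < e ->
  exists d, 0 < d /\ forall y z, Rabs (y - x) < d -> Rabs (z - x) < d ->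
    vnorm N (vsub (Pv y) (Pv z)) < e.
Proof.
  intros Hc He. pose proof (pos_INR N).
  set (e' := e / (INR N + 1) / 2).
  assert (He' : 0 < e') by (unfold e'; repeat apply Rdiv_lt_0_compat; lra).
  destruct (finite_common_delta N
      (fun k d => forall y, Rabs (y - x) < d -> Rabs (Pv y k - Pv x k) < e'))
    as [d [Hd Hclose]].
  - intros i d0 d1 _ Hdd Hd0 y Hy. apply Hd0. lra.
  - intros i Hi. now apply continuity_pt_eps_inv; auto.
  - exists d. split; auto. intros y z Hy Hz. apply vnorm_lt; auto. intros k Hk. unfold vsub.
    replace (Pv y k - Pv z k) with ((Pv y k - Pv x k) - (Pv z k - Pv x k)) by ring.
    eapply Rle_lt_trans; [apply Rabs_triang|]. rewrite Rabs_Ropp.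
    pose proof (Hclose k Hk y Hy). pose proof (Hclose k Hk z Hz). unfold e' in *. lra.
Qed.

(* The value of the extension at [c] is the right limit of [q]. *)
Lemma closed_extension (q : R -> R) c d : c < d ->
  (forall x, c <= x <= d -> forall eps, 0 < eps -> exists δ, 0 < δ /\
     forall y z, c < y <= d -> c < z <= d -> Rabs (y - x) < δ -> Rabs (z - x) < δ ->
       Rabs (q y - q z) < eps) ->
  exists F, cont_on_closed c d F /\ forall t, c < t <= d -> F t = q t.
Proof.
  intros Hcd Hq.
  destruct (proj1 (Hierarchy.filterlim_locally_cauchy (F := at_right c) q)) as [l Hl].
  { intros eps. destruct (Hq c ltac:(lra) eps (cond_pos eps)) as [δ [Hδ Hc]].
    pose proof (Rmin_pos δ (d - c) Hδ ltac:(lra)) as Hm.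
    pose proof (Rmin_l δ (d - c)). pose proof (Rmin_r δ (d - c)).
    exists (fun s => c < s < c + Rmin δ (d - c)). split.
    - exists (mkposreal _ Hm). intros y Hy Hcy. simpl in Hy. unfold ball in Hy; simpl in Hy.
      unfold AbsRing_ball, abs, minus, plus, opp in Hy; simpl in Hy. apply Rabs_def2 in Hy. lra.
    - intros y z Hy Hz. unfold ball; simpl; unfold AbsRing_ball, abs, minus, plus, opp; simpl.
      apply Hc; try lra; rewrite Rabs_pos_eq; lra. }
  exists (fun t => if Rle_dec t c then l else q t). split.
  - apply cont_on_closed_eps; [lra|]. intros t Ht eps He.
    destruct (Rle_dec t c) as [Htc|Htc].
    + destruct (Hl (fun y => Rabs (y - l) < eps)) as [δ Hδ];
        [exists (mkposreal eps He); intros y Hy; exact Hy|].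
      exists δ. split; [apply cond_pos|]. intros s Hs Hst.
      destruct (Rle_dec s c); [rewrite Rminus_diag, Rabs_R0; auto|].
      apply Hδ; [|lra]. replace t with c in Hst by lra. exact Hst.
    + destruct (Hq t Ht eps He) as [δ [Hδ Ht']].
      pose proof (Rmin_l δ (t - c)). pose proof (Rmin_r δ (t - c)).
      exists (Rmin δ (t - c)). split; [apply Rmin_pos; lra|]. intros s Hs Hst.
      assert (c < s) by (apply Rabs_def2 in Hst; lra).
      destruct (Rle_dec s c); [lra|]. apply Ht'; try lra.
      rewrite Rminus_diag, Rabs_R0. lra.
  - intros t Ht. destruct (Rle_dec t c); [lra|reflexivity].
Qed.

Lemma f_lipschitz_component N T f : f_lipschitz N T f ->
  exists L, 0 < L /\ forall v w t s k, 0 < t <= T -> 0 < s <= T -> (k < N)%nat ->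
    Rabs (f v t k - f w s k) <= L * (vnorm N (vsub v w) + Rabs (t - s)).
Proof.
  intros [L HL]. exists (Rabs L + 1). split; [pose proof (Rabs_pos L); lra|].
  intros v w t s k Ht Hs Hk.
  pose proof (Rabs_le_vnorm N (vsub (f v t) (f w s)) k Hk) as Hc. unfold vsub at 1 in Hc.
  pose proof (HL v w t s Ht Hs). pose proof (Rle_abs L).
  pose proof (vnorm_nonneg N (vsub v w)). pose proof (Rabs_pos (t - s)). nra.
Qed.

Lemma f_ext_lipschitz N T f v w t k : f_lipschitz N T f -> 0 < t <= T -> (k < N)%nat ->
  (forall i, (i < N)%nat -> v i = w i) -> f v t k = f w t k.
Proof.
  intros Hl Ht Hk Hvw. destruct (f_lipschitz_component N T f Hl) as [L [HL H]].
  pose proof (H v w t t k Ht Ht Hk) as H1.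
  rewrite vnorm_eq0, Rminus_diag, Rabs_R0, Rplus_0_l, Rmult_0_r in H1
    by (intros i Hi; unfold vsub; rewrite Hvw; auto; ring).
  pose proof (Rabs_pos (f v t k - f w t k)).
  assert (Habs : Rabs (f v t k - f w t k) = 0) by lra. apply Rabs_eq_0 in Habs. lra.
Qed.

(* [f] need not be defined at [t = 0]; the Lipschitz bound still yields a
   continuous extension of [t |-> f (Pv t) t] from (c, d] to [c, d]. *)
Lemma f_along_path_extension N T f (Pv : R -> vec) i c d :
  f_lipschitz N T f -> (i < N)%nat -> 0 <= c -> c < d -> d <= T ->
  (forall k, (k < N)%nat -> forall x, continuity_pt (fun t => Pv t k) x) ->
  exists F, cont_on_closed c d F /\ forall t, c < t <= d -> F t = f (Pv t) t i.
Proof.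
  intros Hl Hi Hc Hcd HdT HPv. destruct (f_lipschitz_component N T f Hl) as [L [HL HLip]].
  apply (closed_extension (fun t => f (Pv t) t i)); auto. intros x Hx eps He.
  assert (He' : 0 < eps / (4 * L)) by (apply Rdiv_lt_0_compat; lra).
  destruct (path_components_close N Pv x (eps / (4 * L))) as [d1 [Hd1 H1]]; auto.
  pose proof (Rmin_l d1 (eps / (4 * L))). pose proof (Rmin_r d1 (eps / (4 * L))).
  exists (Rmin d1 (eps / (4 * L))). split; [apply Rmin_pos; auto|].
  intros y z Hy Hz Hyx Hzx.
  assert (Hv := H1 y z ltac:(lra) ltac:(lra)).
  assert (Rabs (y - z) < 2 * (eps / (4 * L))).
  { replace (y - z) with ((y - x) - (z - x)) by ring.
    eapply Rle_lt_trans; [apply Rabs_triang|]. rewrite Rabs_Ropp. lra. }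
  assert (eps / (4 * L) * L = eps / 4) by (field; lra).
  eapply Rle_lt_trans; [apply HLip; auto; lra|]. nra.
Qed.

Lemma vupd_vupd v m x y : vupd (vupd v m x) m y = vupd v m y.
Proof. apply functional_extensionality. intros i. unfold vupd. now destruct (Nat.eqb i m). Qed.

Lemma vupd_same v m x : vupd v m x m = x.
Proof. unfold vupd. now rewrite Nat.eqb_refl. Qed.

Lemma vupd_id v m : vupd v m (v m) = v.
Proof.
  apply functional_extensionality. intros i. unfold vupd.
  now destruct (Nat.eqb_spec i m); subst.
Qed.

Lemma f_coordinate_mvt N T f v t k m x : f_C1_in_u N T f -> 0 < t <= T ->
  (k < N)%nat -> (m < N)%nat ->
  exists xi, Rmin (v m) x <= xi <= Rmax (v m) x /\
    f (vupd v m x) t k - f v t k = pdf f k m (vupd v m xi) t * (x - v m).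
Proof.
  intros [Hex _] Ht Hk Hm. set (g := fun y => f (vupd v m y) t k).
  assert (Hg : forall y, is_derive g y (pdf f k m (vupd v m y) t)).
  { intros y. unfold pdf. rewrite vupd_same.
    assert (Hd : ex_derive g y).
    { pose proof (Hex (vupd v m y) t k m Ht Hk Hm) as H. rewrite vupd_same in H.
      eapply ex_derive_ext; [|exact H]. intros z. simpl. now rewrite vupd_vupd. }
    replace (Derive _ y) with (Derive g y) by (apply Derive_ext; intros z; now rewrite vupd_vupd).
    now apply Derive_correct. }
  destruct (MVT_gen g (v m) x (fun y => pdf f k m (vupd v m y) t)) as [xi [Hxi Heq]].
  - intros y _. apply Hg.
  - intros y _. apply continuity_pt_filterlim, (@ex_derive_continuous R_AbsRing R_NormedModule).
    eexists; apply Hg.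
  - exists xi. split; auto. unfold g in Heq. now rewrite vupd_id in Heq.
Qed.

(* Walking from [x0] to [x1] one coordinate at a time reduces the estimate to
   the one-variable mean value theorem in each coordinate. *)
Lemma f_frechet_estimate N T f t k x0 : f_lipschitz N T f -> f_C1_in_u N T f ->
  0 < t <= T -> (k < N)%nat -> forall eps, 0 < eps -> exists δ, 0 < δ /\ forall x1,
    sumR N (fun m => Rabs (x1 m - x0 m)) < δ ->
    Rabs (f x1 t k - f x0 t k - sumR N (fun m => pdf f k m x0 t * (x1 m - x0 m)))
      <= eps * sumR N (fun m => Rabs (x1 m - x0 m)).
Proof.
  intros Hl HC Ht Hk eps He.
  destruct (finite_common_delta N (fun m δ => forall w, vnorm N (vsub w x0) < δ ->
      Rabs (pdf f k m w t - pdf f k m x0 t) < eps)) as [δ [Hδ Hpdf]].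
  { intros m a b _ Hab H w Hw. apply H. lra. }
  { intros m Hm. destruct (proj2 HC x0 t k m Ht Hk Hm eps He) as [δ [Hδ H]].
    exists δ; split; auto. intros w Hw. apply H; auto. rewrite Rminus_diag, Rabs_R0; auto. }
  exists δ. split; auto. intros x1 Hx1.
  set (z := fun m i => if Nat.ltb i m then x1 i else x0 i).
  assert (Hstep : forall m, (m < N)%nat ->
    Rabs (f (z (S m)) t k - f (z m) t k - pdf f k m x0 t * (x1 m - x0 m))
      <= eps * Rabs (x1 m - x0 m)).
  { intros m Hm.
    assert (Hzm : z m m = x0 m) by (unfold z; now rewrite Nat.ltb_irrefl).
    assert (HzS : z (S m) = vupd (z m) m (x1 m)).
    { apply functional_extensionality. intros i. unfold z, vupd.
      destruct (Nat.eqb_spec i m), (Nat.ltb_spec i (S m)), (Nat.ltb_spec i m); subst; auto; lia. }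
    destruct (f_coordinate_mvt N T f (z m) t k m (x1 m) HC Ht Hk Hm) as [xi [Hxi Heq]].
    rewrite HzS, Heq, Hzm.
    assert (Hw : vnorm N (vsub (vupd (z m) m xi) x0) < δ).
    { eapply Rle_lt_trans; [apply vnorm_le_sumR_abs|]. eapply Rle_lt_trans; [|exact Hx1].
      apply sumR_le. intros i Hi. unfold vsub, vupd, z.
      destruct (Nat.eqb_spec i m); [subst i|destruct (Nat.ltb i m)].
      - rewrite Hzm in Hxi. unfold Rmin, Rmax in Hxi. destruct (Rle_dec (x0 m) (x1 m));
          unfold Rabs; repeat destruct Rcase_abs; lra.
      - lra.
      - rewrite Rminus_diag, Rabs_R0. apply Rabs_pos. }
    pose proof (Hpdf m Hm _ Hw).
    replace (pdf f k m (vupd (z m) m xi) t * (x1 m - x0 m) - pdf f k m x0 t * (x1 m - x0 m))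
      with ((pdf f k m (vupd (z m) m xi) t - pdf f k m x0 t) * (x1 m - x0 m)) by ring.
    rewrite Rabs_mult. apply Rmult_le_compat_r; [apply Rabs_pos|lra]. }
  assert (Htel : f x1 t k - f x0 t k = sumR N (fun m => f (z (S m)) t k - f (z m) t k)).
  { rewrite (sumR_telescope N (fun m => f (z m) t k)).
    replace (z 0%nat) with x0 by (apply functional_extensionality; intros i; now destruct i).
    f_equal. apply (f_ext_lipschitz N T); auto. intros i Hi. unfold z.
    now replace (Nat.ltb i N) with true by (symmetry; apply Nat.ltb_lt; auto). }
  rewrite Htel, <- sumR_minus, <- sumR_scal.
  eapply Rle_trans; [apply sumR_abs|]. now apply sumR_le.
Qed.

Lemma is_derive_f_segment N T f t v1 v2 k s0 : f_lipschitz N T f -> f_C1_in_u N T f ->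
  0 < t <= T -> (k < N)%nat ->
  is_derive (fun s => f (vcomb s v1 v2) t k) s0
    (sumR N (fun m => pdf f k m (vcomb s0 v1 v2) t * (v1 m - v2 m))).
Proof.
  intros Hl HC Ht Hk. apply is_derive_Reals. intros eps He.
  set (D := sumR N (fun m => Rabs (v1 m - v2 m))).
  assert (HD : 0 <= D) by (apply sumR_nonneg; intros; apply Rabs_pos).
  assert (He' : 0 < eps / (D + 1)) by (apply Rdiv_lt_0_compat; lra).
  destruct (f_frechet_estimate N T f t k (vcomb s0 v1 v2) Hl HC Ht Hk _ He') as [δ [Hδ Hest]].
  assert (Hδ' : 0 < δ / (D + 1)) by (apply Rdiv_lt_0_compat; lra).
  exists (mkposreal _ Hδ'). intros h Hh0 Hh. simpl in Hh.
  assert (Hdiff : forall m, vcomb (s0 + h) v1 v2 m - vcomb s0 v1 v2 m = h * (v1 m - v2 m))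
    by (intros; unfold vcomb; ring).
  assert (Hsum : sumR N (fun m => Rabs (vcomb (s0 + h) v1 v2 m - vcomb s0 v1 v2 m)) = Rabs h * D).
  { unfold D. rewrite <- sumR_scal. apply sumR_ext. intros m _. now rewrite Hdiff, Rabs_mult. }
  assert (Hh' : Rabs h * (D + 1) < δ).
  { apply Rmult_lt_reg_r with (/ (D + 1)); [apply Rinv_0_lt_compat; lra|].
    now rewrite Rmult_assoc, Rinv_r, Rmult_1_r by lra. }
  pose proof (Rabs_pos h).
  specialize (Hest (vcomb (s0 + h) v1 v2)). rewrite Hsum in Hest.
  rewrite (sumR_ext N _ (fun m => h * (pdf f k m (vcomb s0 v1 v2) t * (v1 m - v2 m)))),
    sumR_scal in Hest by (intros m _; rewrite Hdiff; ring).
  specialize (Hest ltac:(nra)).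
  assert (Hhpos : 0 < Rabs h) by (apply Rabs_pos_lt; auto).
  replace ((f (vcomb (s0 + h) v1 v2) t k - f (vcomb s0 v1 v2) t k) / h
      - sumR N (fun m => pdf f k m (vcomb s0 v1 v2) t * (v1 m - v2 m)))
    with ((f (vcomb (s0 + h) v1 v2) t k - f (vcomb s0 v1 v2) t k
      - h * sumR N (fun m => pdf f k m (vcomb s0 v1 v2) t * (v1 m - v2 m))) / h)
    by (field; auto).
  unfold Rdiv. rewrite Rabs_mult, Rabs_inv.
  apply Rle_lt_trans with (eps / (D + 1) * D).
  - apply Rmult_le_reg_r with (Rabs h); auto.
    rewrite Rmult_assoc, Rinv_l, Rmult_1_r by lra. lra.
  - apply Rmult_lt_reg_r with (D + 1); [lra|].
    replace (eps / (D + 1) * D * (D + 1)) with (eps * D) by (field; lra). nra.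
Qed.

Lemma continuity_pt_pdf_segment N T f t v1 v2 k m s0 : f_C1_in_u N T f ->
  0 < t <= T -> (k < N)%nat -> (m < N)%nat ->
  continuity_pt (fun s => pdf f k m (vcomb s v1 v2) t) s0.
Proof.
  intros [_ Hcont] Ht Hk Hm. apply continuity_pt_eps. intros eps He.
  set (D := sumR N (fun i => Rabs (v1 i - v2 i))).
  assert (HD : 0 <= D) by (apply sumR_nonneg; intros; apply Rabs_pos).
  destruct (Hcont (vcomb s0 v1 v2) t k m Ht Hk Hm eps He) as [δ [Hδ H]].
  exists (δ / (D + 1)). split; [apply Rdiv_lt_0_compat; lra|].
  intros y Hy. apply H; auto; [|rewrite Rminus_diag, Rabs_R0; auto].
  eapply Rle_lt_trans; [apply vnorm_le_sumR_abs|].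
  apply Rle_lt_trans with (Rabs (y - s0) * D).
  - unfold D. rewrite <- sumR_scal. apply sumR_le. intros i Hi.
    rewrite <- Rabs_mult. right. f_equal. unfold vsub, vcomb. ring.
  - assert (Rabs (y - s0) * (D + 1) < δ).
    { apply Rmult_lt_reg_r with (/ (D + 1)); [apply Rinv_0_lt_compat; lra|].
      now rewrite Rmult_assoc, Rinv_r, Rmult_1_r by lra. }
    pose proof (Rabs_pos (y - s0)). nra.
Qed.

Lemma f_sub_Jstar N T f t v1 v2 k : f_lipschitz N T f -> f_C1_in_u N T f ->
  0 < t <= T -> (k < N)%nat ->
  f v2 t k - f v1 t k = sumR N (fun i => (v2 i - v1 i) * Jstar f v1 v2 t i k).
Proof.
  intros Hl HC Ht Hk.
  set (dF := fun s => sumR N (fun m => pdf f k m (vcomb s v1 v2) t * (v1 m - v2 m))).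
  assert (H1 : is_RInt dF 0 1 (minus (f (vcomb 1 v1 v2) t k) (f (vcomb 0 v1 v2) t k))).
  { apply (is_RInt_derive (fun s => f (vcomb s v1 v2) t k) dF).
    - intros x _. now apply is_derive_f_segment with T.
    - intros x _. apply continuity_pt_filterlim, continuity_pt_sumR. intros i Hi.
      apply (continuity_pt_mult (fun s => pdf f k i (vcomb s v1 v2) t) (fun _ => v1 i - v2 i)).
      + now apply continuity_pt_pdf_segment with N T.
      + apply continuity_pt_const. intros ? ?; reflexivity. }
  assert (H2 : is_RInt dF 0 1 (sumR N (fun i => (v1 i - v2 i) * Jstar f v1 v2 t i k))).
  { apply (is_RInt_ext (fun s => sumR N (fun m => (v1 m - v2 m) * pdf f k m (vcomb s v1 v2) t))).
    { intros x _. unfold dF. apply sumR_ext. intros; ring. }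
    apply is_RInt_sumR. intros i Hi.
    apply (is_RInt_scal (fun s => pdf f k i (vcomb s v1 v2) t)).
    apply (@RInt_correct R_CompleteNormedModule), (@ex_RInt_continuous R_CompleteNormedModule).
    intros z _. apply continuity_pt_filterlim. now apply continuity_pt_pdf_segment with N T. }
  apply (@is_RInt_unique R_CompleteNormedModule) in H1.
  apply (@is_RInt_unique R_CompleteNormedModule) in H2. rewrite H1 in H2.
  replace (vcomb 1 v1 v2) with v1 in H2
    by (apply functional_extensionality; intros; unfold vcomb; ring).
  replace (vcomb 0 v1 v2) with v2 in H2
    by (apply functional_extensionality; intros; unfold vcomb; ring).
  change (minus (f v1 t k) (f v2 t k)) with (f v1 t k - f v2 t k) in H2.
  rewrite (sumR_ext N _ (fun i => -1 * ((v1 i - v2 i) * Jstar f v1 v2 t i k))), sumR_scal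
    by (intros; ring).
  lra.
Qed.

Lemma Jstar_duality N T f t v1 v2 w : f_lipschitz N T f -> f_C1_in_u N T f -> 0 < t <= T ->
  sumR N (fun i => (v2 i - v1 i) * sumR N (fun k => Jstar f v1 v2 t i k * w k))
  = sumR N (fun k => w k * (f v2 t k - f v1 t k)).
Proof.
  intros Hl HC Ht.
  rewrite (sumR_ext N _ (fun i => sumR N (fun k => (v2 i - v1 i) * Jstar f v1 v2 t i k * w k)))
    by (intros i _; rewrite <- sumR_scal; apply sumR_ext; intros; ring).
  rewrite sumR_swap. apply sumR_ext. intros k Hk.
  rewrite (f_sub_Jstar N T f t v1 v2 k Hl HC Ht Hk), <- sumR_scal.
  apply sumR_ext. intros; ring.
Qed.

Lemma partition_monotone (x : nat -> R) M : (forall j, (j < M)%nat -> x j < x (S j)) ->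
  forall j k, (j <= k)%nat -> (k <= M)%nat -> x j <= x k.
Proof.
  intros H j k Hjk. induction Hjk; intros HkM; [lra|].
  assert (x m < x (S m)) by (apply H; lia). assert (x j <= x m) by (apply IHHjk; lia). lra.
Qed.

Lemma partition_cell (x : nat -> R) M c d : x 0%nat <= c -> c < d -> d <= x M ->
  (forall j, (j <= M)%nat -> ~ c < x j < d) ->
  exists j, (j < M)%nat /\ x j <= c /\ d <= x (S j).
Proof.
  intros H0 Hcd HM Hn.
  assert (Hind : forall m, (m <= M)%nat ->
    x m <= c \/ exists j, (S j <= m)%nat /\ x j <= c /\ d <= x (S j)).
  { induction m; intros Hm; [left; lra|].
    destruct (IHm ltac:(lia)) as [Hl|[j Hj]]; [|right; exists j; split; [lia|apply Hj]].
    destruct (Rle_dec (x (S m)) c); [left; auto|].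
    destruct (Rle_dec d (x (S m))); [right; exists m; split; [lia|split; auto]|].
    exfalso. apply (Hn (S m)); auto. lra. }
  destruct (Hind M ltac:(lia)) as [Hl|[j Hj]]; [lra|]. exists j. split; [lia|apply Hj].
Qed.

Definition nodes (N : nat) (M : nat -> nat) (tt : nat -> nat -> R) : list R :=
  flat_map (fun k => map (tt k) (seq 0 (S (M k)))) (seq 0 N).

Lemma In_nodes N M tt t : is_node N M tt t <-> In t (nodes N M tt).
Proof.
  unfold nodes, is_node. rewrite in_flat_map. split.
  - intros [k [j [Hk [Hj ->]]]]. exists k. split; [apply in_seq; lia|].
    apply in_map, in_seq. lia.
  - intros [k [Hk Ht]]. apply in_map_iff in Ht. destruct Ht as [j [<- Hj]].
    apply in_seq in Hk, Hj. exists k, j. repeat split; lia.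
Qed.

Lemma sumR_mul_normalized N v : vnorm N v <> 0 ->
  sumR N (fun i => v i * (v i / vnorm N v)) = vnorm N v.
Proof.
  intros Hv. rewrite (sumR_ext N _ (fun i => / vnorm N v * v i ^ 2))
    by (intros; unfold Rdiv; ring).
  rewrite sumR_scal, <- vnorm_sqr. field. auto.
Qed.

Section ErrorRepresentation.

Variables (N : nat) (T : R) (f : vec -> R -> vec) (u U phi : R -> vec) (u0 : vec)
  (M : nat -> nat) (tt : nat -> nat -> R) (P : nat -> nat -> list R).

Hypothesis HT : 0 < T.
Hypothesis Hf_lip : f_lipschitz N T f.
Hypothesis Hf_C1 : f_C1_in_u N T f.
Hypothesis Hu_0 : forall i, (i < N)%nat -> u 0 i = u0 i.
Hypothesis Hu_cont : forall i, (i < N)%nat -> cont_on_0T T (fun s => u s i).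
Hypothesis Hu_deriv : forall i t, (i < N)%nat -> 0 < t < T ->
  is_derive (fun s => u s i) t (f (u t) t i).
Hypothesis Htt_0 : forall i, (i < N)%nat -> tt i 0%nat = 0.
Hypothesis Htt_M : forall i, (i < N)%nat -> tt i (M i) = T.
Hypothesis Htt_lt : forall i j, (i < N)%nat -> (j < M i)%nat -> tt i j < tt i (S j).
Hypothesis HU_poly : forall i j t, (i < N)%nat -> (1 <= j <= M i)%nat ->
  tt i (j - 1)%nat < t <= tt i j -> U t i = peval (P i j) t.
Hypothesis Hphi_cont : forall i, (i < N)%nat -> cont_on_0T T (fun s => phi s i).
Hypothesis Hphi_deriv : forall i t, (i < N)%nat -> 0 < t < T -> ~ is_node N M tt t ->
  is_derive (fun s => phi s i) t (- sumR N (fun k => Jstar f (u t) (U t) t i k * phi t k)).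

Definition weighted_residual (i : nat) (t : R) : R :=
  (Derive (fun s => U s i) t - f (U t) t i) * phi t i.

(* [(U_i - u_i) phi_i] on the cell [I_ij], with [U_i] continued by its polynomial. *)
Definition cell_error (i j : nat) (s : R) : R := (peval (P i j) s - u s i) * phi s i.

(* The change of the cell errors accumulated up to time [s], jumps excluded:
   a continuous function whose derivative is the sum of the weighted residuals. *)
Definition smooth_error (s : R) : R :=
  sumR N (fun i => sumR (M i) (fun j =>
    cell_error i (S j) (clamp (tt i j) (tt i (S j)) s) - cell_error i (S j) (tt i j))).

Definition in_cells (c d : R) (J : nat -> nat) : Prop :=
  forall i, (i < N)%nat -> (J i < M i)%nat /\ tt i (J i) <= c /\ d <= tt i (S (J i)).

Lemma tt_range i j : (i < N)%nat -> (j <= M i)%nat -> 0 <= tt i j <= T.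
Proof.
  intros Hi Hj. rewrite <- (Htt_0 i Hi), <- (Htt_M i Hi).
  split; apply (partition_monotone (tt i) (M i)); auto; lia.
Qed.

Lemma node_free_in_cells c d : 0 <= c -> c < d -> d <= T ->
  (forall s, In s (nodes N M tt) -> ~ c < s < d) -> exists J, in_cells c d J.
Proof.
  intros Hc Hcd HdT Hn.
  apply (finite_choice 0%nat N (fun i j => (j < M i)%nat /\ tt i j <= c /\ d <= tt i (S j))).
  intros i Hi. apply partition_cell; [rewrite Htt_0|auto|rewrite Htt_M|]; auto.
  intros j Hj. apply Hn, In_nodes. exists i, j. auto.
Qed.

Lemma U_in_cells c d J i t : in_cells c d J -> (i < N)%nat -> c < t < d ->
  U t i = peval (P i (S (J i))) t.
Proof.
  intros HJ Hi Ht. destruct (HJ i Hi) as [H1 [H2 H3]]. apply HU_poly; [auto|lia|].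
  replace (S (J i) - 1)%nat with (J i) by lia. lra.
Qed.

Lemma f_U_in_cells c d J t k : in_cells c d J -> 0 <= c -> d <= T -> (k < N)%nat ->
  c < t < d -> f (U t) t k = f (fun m => peval (P m (S (J m))) t) t k.
Proof.
  intros HJ Hc HdT Hk Ht. apply (f_ext_lipschitz N T); auto; [lra|].
  intros m Hm. now apply (U_in_cells c d).
Qed.

Lemma weighted_residual_in_cells c d J i t : in_cells c d J -> 0 <= c -> d <= T ->
  (i < N)%nat -> c < t < d ->
  weighted_residual i t = (peval_deriv (P i (S (J i))) t - f (U t) t i) * phi t i.
Proof.
  intros HJ Hc HdT Hi Ht. unfold weighted_residual. f_equal. f_equal.
  rewrite (Derive_ext_loc _ (peval (P i (S (J i))))); [apply is_derive_unique, is_derive_peval|].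
  eapply filter_imp; [|apply (locally_open_interval c d t Ht)].
  intros s Hs. now apply (U_in_cells c d).
Qed.

Lemma weighted_residual_extension c d J i : in_cells c d J -> 0 <= c -> c < d -> d <= T ->
  (i < N)%nat ->
  exists G, cont_on_closed c d G /\ forall t, c < t < d -> weighted_residual i t = G t.
Proof.
  intros HJ Hc Hcd HdT Hi.
  destruct (f_along_path_extension N T f (fun t m => peval (P m (S (J m))) t) i c d)
    as [F [HF HFe]]; auto.
  { intros k _ x. apply continuity_pt_peval. }
  exists (fun t => (peval_deriv (P i (S (J i))) t - F t) * phi t i). split.
  - apply cont_on_closed_mult; [apply cont_on_closed_minus; auto|].
    + apply cont_on_closed_continuous; [lra|]. intros; apply continuity_pt_peval_deriv.
    + apply (cont_on_closed_sub 0 T); try lra. now apply cont_on_0T_closed, Hphi_cont.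
  - intros t Ht.
    rewrite (weighted_residual_in_cells c d J), HFe, (f_U_in_cells c d J); auto; lra.
Qed.

Lemma ex_RInt_weighted_residual i a b : (i < N)%nat -> 0 <= a -> a < b -> b <= T ->
  ex_RInt (weighted_residual i) a b.
Proof.
  intros Hi Ha Hab HbT. apply (ex_RInt_piecewise _ (nodes N M tt)); auto.
  intros c d Hac Hcd Hdb Hn.
  destruct (node_free_in_cells c d) as [J HJ]; try lra; auto.
  apply (weighted_residual_extension c d J); auto; lra.
Qed.

Lemma continuity_pt_smooth_error x : continuity_pt smooth_error x.
Proof.
  unfold smooth_error. apply continuity_pt_sumR. intros i Hi.
  apply continuity_pt_sumR. intros j Hj.
  pose proof (tt_range i j Hi ltac:(lia)). pose proof (tt_range i (S j) Hi ltac:(lia)).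
  pose proof (Htt_lt i j Hi Hj).
  apply (continuity_pt_minus (fun s => cell_error i (S j) (clamp _ _ s)) (fun _ => _));
    [|apply continuity_pt_const; intros ? ?; reflexivity].
  apply (cont_on_closed_sub 0 T); try lra. unfold cell_error.
  apply cont_on_closed_mult; [apply cont_on_closed_minus|].
  - apply cont_on_closed_continuous; [lra|]. intros; apply continuity_pt_peval.
  - now apply cont_on_0T_closed, Hu_cont.
  - now apply cont_on_0T_closed, Hphi_cont.
Qed.

Lemma is_derive_cell_error i j t : (i < N)%nat -> 0 < t < T -> ~ is_node N M tt t ->
  is_derive (cell_error i j) t
    ((peval_deriv (P i j) t - f (u t) t i) * phi t i
     - (peval (P i j) t - u t i) * sumR N (fun k => Jstar f (u t) (U t) t i k * phi t k)).
Proof.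
  intros Hi Ht Hn. unfold cell_error.
  replace (_ - _) with ((peval_deriv (P i j) t - f (u t) t i) * phi t i
     + (peval (P i j) t - u t i) * (- sumR N (fun k => Jstar f (u t) (U t) t i k * phi t k)))
    by ring.
  apply (is_derive_mult (fun s => peval (P i j) s - u s i) (fun s => phi s i));
    [|auto|intros; apply Rmult_comm].
  apply (is_derive_minus (peval (P i j)) (fun s => u s i)); auto. apply is_derive_peval.
Qed.

(* Near a point of a node-free interval only the active cell of each component
   moves; the clamps of all other cells are locally constant. *)
Lemma is_derive_smooth_error_component c d J i t l : in_cells c d J -> (i < N)%nat ->
  c < t < d -> is_derive (cell_error i (S (J i))) t l ->
  is_derive (fun s => sumR (M i) (fun j =>
    cell_error i (S j) (clamp (tt i j) (tt i (S j)) s) - cell_error i (S j) (tt i j))) t l.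
Proof.
  intros HJ Hi Ht Hl. destruct (HJ i Hi) as [HJi [Hc Hd]].
  rewrite <- (sumR_delta (M i) (J i) l HJi). apply is_derive_sumR. intros j Hj.
  assert (Hmono : forall j k, (j <= k)%nat -> (k <= M i)%nat -> tt i j <= tt i k)
    by (apply partition_monotone; auto).
  pose proof (Htt_lt i j Hi Hj).
  destruct (Nat.eqb_spec j (J i)) as [->|Hne].
  - set (a := cell_error i (S (J i)) (tt i (J i))).
    apply (is_derive_ext_loc (fun s => cell_error i (S (J i)) s - a)).
    + eapply filter_imp; [|apply (locally_open_interval c d t Ht)].
      intros s Hs. rewrite clamp_id; auto. lra.
    + pose proof (is_derive_minus _ _ t l 0 Hl (is_derive_const a t)) as Hdiff.
      replace l with (minus l 0) by (unfold minus, plus, opp; simpl; ring). exact Hdiff.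
  - set (e := if Nat.ltb j (J i) then tt i (S j) else tt i j).
    apply (is_derive_ext_loc (fun _ => cell_error i (S j) e - cell_error i (S j) (tt i j)));
      [|apply (@is_derive_const R_AbsRing)].
    eapply filter_imp; [|apply (locally_open_interval c d t Ht)]. intros s Hs. unfold e.
    destruct (Nat.ltb_spec j (J i)).
    + assert (tt i (S j) <= tt i (J i)) by (apply Hmono; lia). rewrite clamp_high; auto; lra.
    + assert (tt i (S (J i)) <= tt i j) by (apply Hmono; lia). rewrite clamp_low; auto; lra.
Qed.

(* The dual equation makes the [u]-dependent parts of the derivatives cancel
   against [f (U) - f (u)], leaving exactly the weighted residuals. *)
Lemma is_derive_smooth_error c d J t : in_cells c d J -> 0 <= c -> d <= T -> c < t < d ->
  ~ is_node N M tt t ->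
  is_derive smooth_error t (sumR N (fun i => weighted_residual i t)).
Proof.
  intros HJ Hc HdT Ht Hn.
  set (dA := fun i => (peval_deriv (P i (S (J i))) t - f (u t) t i) * phi t i
     - (peval (P i (S (J i))) t - u t i) * sumR N (fun k => Jstar f (u t) (U t) t i k * phi t k)).
  replace (sumR N (fun i => weighted_residual i t)) with (sumR N dA).
  - apply is_derive_sumR. intros i Hi. apply (is_derive_smooth_error_component c d J); auto.
    apply is_derive_cell_error; auto. lra.
  - unfold dA. rewrite sumR_minus.
    rewrite (sumR_ext N (fun i => (peval _ t - u t i) * _)
      (fun i => (U t i - u t i) * sumR N (fun k => Jstar f (u t) (U t) t i k * phi t k)))
      by (intros i Hi; now rewrite (U_in_cells c d J)).
    rewrite (Jstar_duality N T f t (u t) (U t) (phi t)) by (auto; lra).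
    rewrite <- sumR_minus. apply sumR_ext. intros i Hi.
    rewrite (weighted_residual_in_cells c d J); auto. ring.
Qed.

Lemma sumR_RInt_weighted_residual :
  sumR N (fun i => RInt (weighted_residual i) 0 T) = smooth_error T - smooth_error 0.
Proof.
  transitivity (RInt (fun t => sumR N (fun i => weighted_residual i t)) 0 T).
  - symmetry. apply is_RInt_unique, is_RInt_sumR. intros i Hi.
    apply (@RInt_correct R_CompleteNormedModule), ex_RInt_weighted_residual; auto; lra.
  - apply is_RInt_unique.
    apply (is_RInt_derive_piecewise _ _ (nodes N M tt)); auto.
    { apply continuity_pt_smooth_error. }
    intros c d Hc Hcd HdT Hn. destruct (node_free_in_cells c d) as [J HJ]; auto.
    destruct (finite_choice (fun _ => 0) N (fun i G => cont_on_closed c d G /\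
        forall t, c < t < d -> weighted_residual i t = G t)) as [G HG].
    { intros i Hi. apply (weighted_residual_extension c d J); auto. }
    exists (fun t => sumR N (fun i => G i t)). split.
    + apply cont_on_closed_sumR; [lra|]. intros i Hi. apply HG; auto.
    + intros t Ht.
      replace (sumR N (fun i => G i t)) with (sumR N (fun i => weighted_residual i t))
        by (apply sumR_ext; intros i Hi; apply HG; auto).
      split; auto. apply (is_derive_smooth_error c d J); auto.
      intros Hnd. apply In_nodes in Hnd. apply (Hn t); auto.
Qed.

Lemma M_pos i : (i < N)%nat -> (0 < M i)%nat.
Proof.
  intros Hi. destruct (M i) eqn:E; [|lia].
  pose proof (Htt_M i Hi). pose proof (Htt_0 i Hi). rewrite E in *. lra.
Qed.

Lemma smooth_error_0 : smooth_error 0 = 0.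
Proof.
  unfold smooth_error. transitivity (sumR N (fun _ => 0)); [|apply sumR_zero].
  apply sumR_ext. intros i Hi.
  transitivity (sumR (M i) (fun _ => 0)); [|apply sumR_zero]. apply sumR_ext. intros j Hj.
  pose proof (tt_range i j Hi ltac:(lia)). pose proof (Htt_lt i j Hi Hj).
  rewrite clamp_low; [ring|lra|lra].
Qed.

Lemma smooth_error_T : smooth_error T = sumR N (fun i => sumR (M i) (fun j =>
  cell_error i (S j) (tt i (S j)) - cell_error i (S j) (tt i j))).
Proof.
  unfold smooth_error. apply sumR_ext. intros i Hi. apply sumR_ext. intros j Hj.
  pose proof (tt_range i (S j) Hi ltac:(lia)). pose proof (Htt_lt i j Hi Hj).
  rewrite clamp_high; [reflexivity|lra|lra].
Qed.

(* Each jump term turns the cell increments into a telescoping sum; the jump at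
   [t_{i0} = 0] uses the convention [U_i(0^-) = u_i(0)]. *)
Lemma cell_increments_jumps_telescope i : (i < N)%nat ->
  sumR (M i) (fun j => cell_error i (S j) (tt i (S j)) - cell_error i (S j) (tt i j)
     + jump_prev P tt u0 i (S j) * phi (tt i j) i)
  = (U T i - u T i) * phi T i.
Proof.
  intros Hi.
  set (F := fun j => match j with O => 0 | S _ => cell_error i j (tt i j) end).
  rewrite (sumR_ext (M i) _ (fun j => F (S j) - F j)), sumR_telescope.
  - pose proof (M_pos i Hi). destruct (M i) as [|m] eqn:EM; [lia|].
    unfold F, cell_error. rewrite <- EM, (Htt_M i Hi), (HU_poly i (M i) T Hi); [ring|lia|].
    rewrite EM. replace (S m - 1)%nat with m by lia.
    rewrite <- (Htt_M i Hi), EM. split; [apply Htt_lt; auto; lia|lra].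
  - intros j Hj. unfold jump_prev, F, cell_error. replace (S j - 1)%nat with j by lia.
    destruct j; simpl.
    + rewrite (Htt_0 i Hi), (Hu_0 i Hi). ring.
    + ring.
Qed.

Lemma sumR_RInt_weighted_residual_cells i : (i < N)%nat ->
  sumR (M i) (fun j => RInt (weighted_residual i) (tt i j) (tt i (S j)))
  = RInt (weighted_residual i) 0 T.
Proof.
  intros Hi. symmetry. apply is_RInt_unique. rewrite <- (Htt_0 i Hi), <- (Htt_M i Hi).
  apply is_RInt_partition. intros j Hj.
  pose proof (tt_range i j Hi ltac:(lia)). pose proof (tt_range i (S j) Hi ltac:(lia)).
  pose proof (Htt_lt i j Hi Hj). apply ex_RInt_weighted_residual; auto; lra.
Qed.

Lemma error_representation_dot :
  sumR N (fun i => (U T i - u T i) * phi T i) =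
  sumR N (fun i => sumR (M i) (fun j' => let j := S j' in
    RInt (weighted_residual i) (tt i (j - 1)%nat) (tt i j)
    + jump_prev P tt u0 i j * phi (tt i (j - 1)%nat) i)).
Proof.
  set (jumps := fun i => sumR (M i) (fun j => jump_prev P tt u0 i (S j) * phi (tt i j) i)).
  transitivity (sumR N (fun i => RInt (weighted_residual i) 0 T + jumps i)).
  - rewrite sumR_plus, sumR_RInt_weighted_residual, smooth_error_0, smooth_error_T,
      Rminus_0_r, <- sumR_plus.
    apply sumR_ext. intros i Hi. rewrite <- cell_increments_jumps_telescope by auto.
    unfold jumps. now rewrite <- sumR_plus.
  - apply sumR_ext. intros i Hi. unfold jumps.
    rewrite <- sumR_RInt_weighted_residual_cells, <- sumR_plus by auto.
    apply sumR_ext. intros j _. cbv zeta. now replace (S j - 1)%nat with j by lia.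
Qed.

End ErrorRepresentation.

Theorem corollary6p2
  (N : nat) (T : R) (f : vec -> R -> vec)
  (u U phi : R -> vec) (u0 : vec)
  (M : nat -> nat) (tt : nat -> nat -> R) (P : nat -> nat -> list R) :
  0 < T ->
  f_bounded N T f -> f_lipschitz N T f -> f_C1_in_u N T f ->
  (forall i, (i < N)%nat -> u 0 i = u0 i) ->
  (forall i, (i < N)%nat -> cont_on_0T T (fun s => u s i)) ->
  (forall i t, (i < N)%nat -> 0 < t < T ->
     is_derive (fun s => u s i) t (f (u t) t i)) ->
  (forall i, (i < N)%nat ->
     filterlim (fun h => (u (T + h) i - u T i) / h) (at_left 0)
       (locally (f (u T) T i))) ->
  (forall i, (i < N)%nat -> tt i 0%nat = 0) ->
  (forall i, (i < N)%nat -> tt i (M i) = T) ->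
  (forall i j, (i < N)%nat -> (j < M i)%nat -> tt i j < tt i (S j)) ->
  (forall i j t, (i < N)%nat -> (1 <= j <= M i)%nat ->
     tt i (j - 1)%nat < t <= tt i j -> U t i = peval (P i j) t) ->
  (forall i, (i < N)%nat -> filterlim (fun s => U s i) (at_right T) (locally (U T i))) ->
  vnorm N (vsub (U T) (u T)) <> 0 ->
  (forall i, (i < N)%nat -> cont_on_0T T (fun s => phi s i)) ->
  (forall i t, (i < N)%nat -> 0 < t < T -> ~ is_node N M tt t ->
     is_derive (fun s => phi s i) t
       (- sumR N (fun k => Jstar f (u t) (U t) t i k * phi t k))) ->
  (forall i, (i < N)%nat ->
     phi T i = (U T i - u T i) / vnorm N (vsub (U T) (u T))) ->
  vnorm N (vsub (U T) (u T)) =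
  sumR N (fun i =>
    sumR (M i) (fun j' =>
      let j := S j' in
      RInt (fun t => (Derive (fun s => U s i) t - f (U t) t i) * phi t i)
           (tt i (j - 1)%nat) (tt i j)
      + jump_prev P tt u0 i j * phi (tt i (j - 1)%nat) i)).
Proof.
  intros HT _ Hf_lip Hf_C1 Hu_0 Hu_cont Hu_deriv _ Htt_0 Htt_M Htt_lt HU_poly _
    He Hphi_cont Hphi_deriv Hphi_T.
  rewrite <- (sumR_mul_normalized N (vsub (U T) (u T))) by exact He.
  rewrite <- (sumR_ext N (fun i => (U T i - u T i) * phi T i))
    by (intros i Hi; rewrite Hphi_T by exact Hi; reflexivity).
  exact (error_representation_dot N T f u U phi u0 M tt P HT Hf_lip Hf_C1 Hu_0 Hu_cont
    Hu_deriv Htt_0 Htt_M Htt_lt HU_poly Hphi_cont Hphi_deriv).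
Qed.
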